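(* Let $\mathcal{D}[t]\subset\mathcal{H}\subset\mathcal{D}^\times[t^\times]$ be a rigged Hilbert space with $\mathcal{D}[t]$ complete and reflexive. A sequence $\{\zeta_n\}$ of elements of $\mathcal{D}^\times$ is Bessel-like if and only if, for every orthonormal basis $\{e_n\}$ of $\mathcal{H}$, there exists $W\in\mathcal{C}(\mathcal{H},\mathcal{D}^\times)$ such that $We_n=\zeta_n$ for every $n\in\mathbb{N}$ (here $W$ denotes its continuous extension to $\mathcal{H}$).
   Context: A rigged Hilbert space $\mathcal{D}[t]\subset\mathcal{H}\subset\mathcal{D}^\times[t^\times]$: $\mathcal{D}$ is a dense subspace of the Hilbert space $\mathcal{H}$ with a locally convex topology $t$ finer than the norm topology, $\mathcal{D}^\times$ is the space of continuous conjugate-linear functionals on $\mathcal{D}[t]$ with the strong dual topology $t^\times=\beta(\mathcal{D}^\times,\mathcal{D})$, $\mathcal{H}\subset\mathcal{D}^\times$, and the duality form $\langle\Phi,\eta\rangle$ (value of $\Phi\in\mathcal{D}^\times$ at $\eta\in\mathcal{D}$) extends the inner product. $\mathcal{L}(\mathcal{D},\mathcal{D}^\times)$ denotes the continuous linear maps from $\mathcal{D}[t]$ into $\mathcal{D}^\times[t^\times]$. For $\mathcal{E},\mathcal{F}\in\{\mathcal{D},\mathcal{H},\mathcal{D}^\times\}$ (with their respective topologies $t$, norm, $t^\times$), $\mathcal{C}(\mathcal{E},\mathcal{F})$ is the set of $X\in\mathcal{L}(\mathcal{D},\mathcal{D}^\times)$ for which there exists a continuous linear map $Y:\mathcal{E}\to\mathcal{F}$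 with $Y\xi=X\xi$ for all $\xi\in\mathcal{D}$; $X$ is identified with $Y$. A sequence $\{\zeta_n\}\subset\mathcal{D}^\times$ is Bessel-like if for every bounded subset $\mathcal{M}$ of $\mathcal{D}[t]$, $\sup_{\eta\in\mathcal{M}}\sum_{k=1}^\infty|\langle\zeta_k,\eta\rangle|^2<\infty$. *)

From Stdlib Require Import Reals List.
From Coquelicot Require Import Coquelicot.
Open Scope R_scope.

Section RHS.
Variable V : ModuleSpace C_Ring.
(* ip : the inner product of H (linear in the first, conjugate-linear in
   the second argument). *)
Variable ip : V -> V -> C.

Definition is_inner_product : Prop :=
  (forall x y z, ip (plus x y) z = Cplus (ip x z) (ip y z)) /\
  (forall (a : C) x z, ip (scal a x) z = Cmult a (ip x z)) /\
  (forall x y, ip y x = Cconj (ip x y)) /\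
  (forall x, 0 <= Re (ip x x)) /\
  (forall x, ip x x = RtoC 0 -> x = zero).

Definition hnorm (x : V) : R := sqrt (Re (ip x x)).

Definition is_hilbert : Prop :=
  is_inner_product /\
  forall u : nat -> V,
    (forall eps, 0 < eps -> exists N, forall m n, (N <= m)%nat -> (N <= n)%nat ->
        hnorm (minus (u m) (u n)) < eps) ->
    exists l, forall eps, 0 < eps -> exists N, forall n, (N <= n)%nat ->
        hnorm (minus (u n) l) < eps.

Definition is_ONB (e : nat -> V) : Prop :=
  (forall m n, ip (e m) (e n) = if Nat.eqb m n then RtoC 1 else RtoC 0) /\
  (forall x, (forall n, ip x (e n) = RtoC 0) -> x = zero).

(* The dense subspace D (a predicate on V) and a locally convex topology t
   on D, given by a family of seminorms p : I -> V -> R (only their values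
   on D matter). *)
Variable Dp : V -> Prop.
Variable I : Type.
Variable p : I -> V -> R.

Fixpoint sum_sn (F : list I) (x : V) : R :=
  match F with nil => 0 | cons i F' => p i x + sum_sn F' x end.

Definition is_dense_subspace : Prop :=
  Dp zero /\ (forall x y, Dp x -> Dp y -> Dp (plus x y)) /\
  (forall (a : C) x, Dp x -> Dp (scal a x)) /\
  (forall x eps, 0 < eps -> exists d, Dp d /\ hnorm (minus x d) < eps).

Definition is_seminorm_family : Prop :=
  forall i, (forall x, Dp x -> 0 <= p i x) /\
            (forall x y, Dp x -> Dp y -> p i (plus x y) <= p i x + p i y) /\
            (forall (a : C) x, Dp x -> p i (scal a x) = Cmod a * p i x).

Definition t_finer_than_norm : Prop :=
  exists (F : list I) (c : R), forall x, Dp x -> hnorm x <= c * sum_sn F x.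

Definition is_rigged : Prop :=
  is_hilbert /\ is_dense_subspace /\ is_seminorm_family /\ t_finer_than_norm.

Definition t_bounded (M : V -> Prop) : Prop :=
  (forall x, M x -> Dp x) /\
  forall i, exists b, forall x, M x -> p i x <= b.

(* D^× : continuous conjugate-linear functionals on D[t]; an element is a
   function V -> C of which only the restriction to D matters;
   ⟨Φ, η⟩ = Φ η. *)
Definition in_Dx (Phi : V -> C) : Prop :=
  (forall x y, Dp x -> Dp y -> Phi (plus x y) = Cplus (Phi x) (Phi y)) /\
  (forall (a : C) x, Dp x -> Phi (scal a x) = Cmult (Cconj a) (Phi x)) /\
  exists (F : list I) (c : R), forall x, Dp x -> Cmod (Phi x) <= c * sum_sn F x.

(* bounded subsets of D^×[t^×] (strong dual topology: uniform convergence
   on bounded subsets of D[t]) *)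
Definition strong_bounded (B : (V -> C) -> Prop) : Prop :=
  (forall Phi, B Phi -> in_Dx Phi) /\
  forall M, t_bounded M -> exists b, forall Phi x, B Phi -> M x -> Cmod (Phi x) <= b.

(* continuous linear functionals on D^×[t^×] (elements of the strong bidual) *)
Definition in_Dxx (Psi : (V -> C) -> C) : Prop :=
  (forall Phi Chi, in_Dx Phi -> in_Dx Chi ->
     Psi (fun x => Cplus (Phi x) (Chi x)) = Cplus (Psi Phi) (Psi Chi)) /\
  (forall (a : C) Phi, in_Dx Phi -> Psi (fun x => Cmult a (Phi x)) = Cmult a (Psi Phi)) /\
  (forall Phi Chi, in_Dx Phi -> in_Dx Chi -> (forall x, Dp x -> Phi x = Chi x) ->
     Psi Phi = Psi Chi) /\
  exists M c, t_bounded M /\ forall Phi r, in_Dx Phi -> 0 <= r ->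
     (forall x, M x -> Cmod (Phi x) <= r) -> Cmod (Psi Phi) <= c * r.

(* D[t] is reflexive: the canonical map J : D -> D^××, (J η)(Φ) = ⟨Φ,η⟩,
   is a bijection onto D^×× and a homeomorphism from D[t] onto D^××
   with its strong topology β(D^××, D^×). *)
Definition reflexive : Prop :=
  (* injective *)
  (forall x, Dp x -> (forall Phi, in_Dx Phi -> Phi x = RtoC 0) -> x = zero) /\
  (* onto *)
  (forall Psi, in_Dxx Psi -> exists x, Dp x /\ forall Phi, in_Dx Phi -> Psi Phi = Phi x) /\
  (* J continuous *)
  (forall B, strong_bounded B -> exists (F : list I) (c : R),
      forall Phi x, B Phi -> Dp x -> Cmod (Phi x) <= c * sum_sn F x) /\
  (* J^{-1} continuous *)
  (forall i, exists B c, strong_bounded B /\ forall x r, Dp x -> 0 <= r ->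
      (forall Phi, B Phi -> Cmod (Phi x) <= r) -> p i x <= c * r).

Definition t_complete : Prop :=
  forall (J : Type) (le : J -> J -> Prop) (u : J -> V),
    (forall j, le j j) -> (forall j k l, le j k -> le k l -> le j l) ->
    (exists j : J, True) -> (forall j k, exists l, le j l /\ le k l) ->
    (forall j, Dp (u j)) ->
    (forall i eps, 0 < eps -> exists j0, forall j k, le j0 j -> le j0 k ->
        p i (minus (u j) (u k)) < eps) ->
    exists y, Dp y /\ forall i eps, 0 < eps -> exists j0, forall j, le j0 j ->
        p i (minus (u j) y) < eps.

Definition bessel_like (zeta : nat -> V -> C) : Prop :=
  forall M, t_bounded M -> exists b, forall x N, M x ->
    sum_n (fun k => Cmod (zeta k x) ^ 2) N <= b.

(* W ∈ C(H, D^×), identified with its continuous extension H -> D^×: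
   a linear map H -> D^× continuous from the norm topology to t^×. *)
Definition in_C_H_Dx (W : V -> V -> C) : Prop :=
  (forall x, in_Dx (W x)) /\
  (forall x y z, Dp z -> W (plus x y) z = Cplus (W x z) (W y z)) /\
  (forall (a : C) x z, Dp z -> W (scal a x) z = Cmult a (W x z)) /\
  (forall M, t_bounded M -> exists c, forall x z, M z -> Cmod (W x z) <= c * hnorm x).

End RHS.

From Stdlib Require Import Reals Lra Lia List.
From Coquelicot Require Import Coquelicot.
Open Scope R_scope.

(* Given a Bessel-like sequence and an orthonormal basis, the operator is the
   synthesis map [W x = sum_k <x, e_k> zeta_k].  At a point z of a bounded set
   M of D, Cauchy-Schwarz and Bessel's inequality bound the partial sums by
   [|x| * sqrt b_M], which gives both the convergence of the series and the
   continuity of W from H to the strong dual; that the limit is again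
   t-continuous on D uses reflexivity: the partial sums form a strongly bounded,
   hence equicontinuous, subset of D^x.  Conversely, testing W on
   [y = sum_(k <= N) conj (zeta_k z) e_k], for which [W y z = |y|^2], turns the
   continuity bound [|W y z| <= c |y|] into [sum_(k <= N) |zeta_k z|^2 <= c^2]. *)

Lemma sum_n_RtoC (f : nat -> R) N : sum_n (fun k => RtoC (f k)) N = RtoC (sum_n f N).
Proof.
  induction N.
  - now rewrite !sum_O.
  - rewrite !sum_Sn, IHN. apply injective_projections; simpl; [reflexivity | ring].
Qed.

Lemma sum_n_Cconj (f : nat -> C) N : Cconj (sum_n f N) = sum_n (fun k => Cconj (f k)) N.
Proof.
  induction N.
  - now rewrite !sum_O.
  - rewrite !sum_Sn. simpl. now rewrite Cplus_conj, IHN.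
Qed.

Lemma sum_n_kronecker (c : C) j N :
  sum_n (fun k => if Nat.eqb k j then c else RtoC 0) N = if Nat.leb j N then c else RtoC 0.
Proof.
  induction N.
  - rewrite sum_O. now destruct j.
  - rewrite sum_Sn, IHN.
    destruct (Nat.eqb_spec (S N) j) as [<- | Hne].
    + rewrite (proj2 (Nat.leb_gt (S N) N)), Nat.leb_refl by lia.
      apply injective_projections; simpl; ring.
    + destruct (Nat.leb_spec j N), (Nat.leb_spec j (S N)); try lia;
        apply injective_projections; simpl; ring.
Qed.

Lemma sum_n_nonneg (f : nat -> R) N : (forall k, 0 <= f k) -> 0 <= sum_n f N.
Proof.
  intros Hf. induction N.
  - rewrite sum_O. apply Hf.
  - rewrite sum_Sn. apply Rplus_le_le_0_compat; [exact IHN | apply Hf].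
Qed.

Lemma Cauchy_Schwarz_step T A B u v : 0 <= A -> 0 <= B -> T ^ 2 <= A * B ->
  (T + u * v) ^ 2 <= (A + u ^ 2) * (B + v ^ 2).
Proof.
  intros HA HB HT.
  assert (Hcross : 2 * T * (u * v) <= A * v ^ 2 + B * u ^ 2).
  { destruct (Rle_dec (2 * T * (u * v)) 0); [nra|].
    apply Rsqr_incr_0_var; [unfold Rsqr | nra].
    pose proof (pow2_ge_0 (A * v ^ 2 - B * u ^ 2)).
    assert (T ^ 2 * (u * v) ^ 2 <= A * B * (u * v) ^ 2)
      by (apply Rmult_le_compat_r; [apply pow2_ge_0 | exact HT]).
    replace ((A * v ^ 2 + B * u ^ 2) * (A * v ^ 2 + B * u ^ 2))
      with ((A * v ^ 2 - B * u ^ 2) ^ 2 + 4 * (A * B * (u * v) ^ 2)) by ring.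
    replace (2 * T * (u * v) * (2 * T * (u * v))) with (4 * (T ^ 2 * (u * v) ^ 2)) by ring.
    lra. }
  nra.
Qed.

Lemma sum_n_Cauchy_Schwarz_sqr (u v : nat -> R) N :
  (sum_n (fun k => u k * v k) N) ^ 2
    <= sum_n (fun k => u k ^ 2) N * sum_n (fun k => v k ^ 2) N.
Proof.
  induction N.
  - rewrite !sum_O. nra.
  - rewrite !sum_Sn. simpl plus.
    apply Cauchy_Schwarz_step; try apply sum_n_nonneg; intros; try apply pow2_ge_0.
    exact IHN.
Qed.

Lemma sum_n_Cauchy_Schwarz (u v : nat -> R) N :
  sum_n (fun k => u k * v k) N
    <= sqrt (sum_n (fun k => u k ^ 2) N) * sqrt (sum_n (fun k => v k ^ 2) N).
Proof.
  rewrite <- sqrt_mult by (apply sum_n_nonneg; intros; apply pow2_ge_0).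
  eapply Rle_trans; [apply Rle_abs|].
  rewrite <- sqrt_Rsqr_abs. apply sqrt_le_1_alt.
  rewrite Rsqr_pow2. apply sum_n_Cauchy_Schwarz_sqr.
Qed.

Lemma le_sqr_of_le_mul_sqrt S c : 0 <= S -> S <= c * sqrt S -> S <= c ^ 2.
Proof.
  intros HS Hc. pose proof (sqrt_pos S). pose proof (sqrt_sqrt S HS).
  destruct (Req_dec (sqrt S) 0) as [Hzero | Hpos]; [nra|].
  assert (sqrt S <= c) by nra.
  nra.
Qed.

Definition Cseries (a : nat -> C) : C :=
  iota (fun l : C_CompleteNormedModule => @is_series C_AbsRing C_NormedModule a l).

Lemma Cseries_unique (a : nat -> C) l :
  @is_series C_AbsRing C_NormedModule a l -> Cseries a = l.
Proof. apply (iota_filterlim_locally (sum_n a) l). Qed.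

Lemma Cmod_sum_n_le (a : nat -> C) N : Cmod (sum_n a N) <= sum_n (fun k => Cmod (a k)) N.
Proof. apply (norm_sum_n_m (K := C_AbsRing) (V := C_NormedModule) a 0 N). Qed.

Lemma is_series_Cseries (a : nat -> C) B :
  (forall N, sum_n (fun k => Cmod (a k)) N <= B) ->
  @is_series C_AbsRing C_NormedModule a (Cseries a).
Proof.
  intros HB.
  destruct (ex_series_le (K := C_AbsRing) (V := C_CompleteNormedModule) a
              (fun k => Cmod (a k))) as [l Hl].
  - intros k. apply Rle_refl.
  - destruct (ex_finite_lim_seq_incr (sum_n (fun k => Cmod (a k))) B) as [l Hl]; trivial.
    + intros n. rewrite sum_Sn. pose proof (Cmod_ge_0 (a (S n))). unfold plus; simpl. lra.
    + now exists l.
  - now rewrite (Cseries_unique a l Hl).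
Qed.

Lemma Cmod_is_series_le (a : nat -> C) l B : @is_series C_AbsRing C_NormedModule a l ->
  (forall N, Cmod (sum_n a N) <= B) -> Cmod l <= B.
Proof.
  intros Hl HB.
  assert (Hle := filterlim_le (F := eventually) (fun N => norm (sum_n a N)) (fun _ => B)
                   (norm l) B).
  simpl in Hle. apply Hle.
  - exists 0%nat. intros N _. apply HB.
  - eapply filterlim_comp; [exact Hl | apply filterlim_norm].
  - apply filterlim_const.
Qed.

Section InnerProduct.
Variables (V : ModuleSpace C_Ring) (ip : V -> V -> C).
Hypothesis HIP : is_inner_product V ip.

Lemma ip_plus_l x y z : ip (plus x y) z = Cplus (ip x z) (ip y z).
Proof. apply HIP. Qed.

Lemma ip_scal_l a x z : ip (scal a x) z = Cmult a (ip x z).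
Proof. apply HIP. Qed.

Lemma ip_conj x y : ip y x = Cconj (ip x y).
Proof. apply HIP. Qed.

Lemma ip_self_Re_nonneg x : 0 <= Re (ip x x).
Proof. apply HIP. Qed.

Lemma ip_plus_r x y z : ip x (plus y z) = Cplus (ip x y) (ip x z).
Proof. rewrite ip_conj, ip_plus_l, Cplus_conj, <- !ip_conj. reflexivity. Qed.

Lemma ip_scal_r a x y : ip x (scal a y) = Cmult (Cconj a) (ip x y).
Proof. rewrite ip_conj, ip_scal_l, Cmult_conj, <- ip_conj. reflexivity. Qed.

Lemma ip_sum_n_l (u : nat -> V) w N : ip (sum_n u N) w = sum_n (fun k => ip (u k) w) N.
Proof.
  induction N.
  - now rewrite !sum_O.
  - rewrite !sum_Sn, ip_plus_l, IHN. reflexivity.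
Qed.

Lemma ip_sum_n_r (u : nat -> V) w N : ip w (sum_n u N) = sum_n (fun k => ip w (u k)) N.
Proof.
  rewrite ip_conj, ip_sum_n_l, sum_n_Cconj.
  apply sum_n_ext. intros k. now rewrite <- ip_conj.
Qed.

Variable e : nat -> V.
Hypothesis He : forall m n, ip (e m) (e n) = if Nat.eqb m n then RtoC 1 else RtoC 0.

Definition lin_comb (c : nat -> C) N : V := sum_n (fun k => scal (c k) (e k)) N.

Lemma ip_lin_comb_e c N j : (j <= N)%nat -> ip (lin_comb c N) (e j) = c j.
Proof.
  intros Hj. unfold lin_comb. rewrite ip_sum_n_l.
  rewrite (sum_n_ext _ (fun k => if Nat.eqb k j then c j else RtoC 0)).
  - rewrite sum_n_kronecker. now rewrite (proj2 (Nat.leb_le j N) Hj).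
  - intros k. rewrite ip_scal_l, He.
    destruct (Nat.eqb_spec k j) as [-> | _]; apply injective_projections; simpl; ring.
Qed.

Lemma ip_lin_comb_self c N :
  ip (lin_comb c N) (lin_comb c N) = RtoC (sum_n (fun k => Cmod (c k) ^ 2) N).
Proof.
  rewrite <- sum_n_RtoC. unfold lin_comb at 2. rewrite ip_sum_n_r.
  apply sum_n_ext_loc. intros k Hk.
  rewrite ip_scal_r, ip_lin_comb_e, Cmod2_conj by exact Hk. apply Cmult_comm.
Qed.

(* Expand [0 <= <x - s, x - s>] for the partial expansion [s] of [x]: all four
   terms equal the same sum of squares. *)
Lemma bessel_inequality x N : sum_n (fun k => Cmod (ip x (e k)) ^ 2) N <= Re (ip x x).
Proof.
  set (s := lin_comb (fun k => ip x (e k)) N).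
  set (S := sum_n (fun k => Cmod (ip x (e k)) ^ 2) N).
  assert (Hss : ip s s = RtoC S) by apply ip_lin_comb_self.
  assert (Hsx : ip s x = RtoC S).
  { unfold s, S, lin_comb. rewrite ip_sum_n_l, <- sum_n_RtoC. apply sum_n_ext. intros k.
    rewrite ip_scal_l, (ip_conj x (e k)), Cmod2_conj. reflexivity. }
  assert (Hxs : ip x s = RtoC S).
  { rewrite ip_conj, Hsx. apply injective_projections; simpl; [reflexivity | ring]. }
  pose proof (ip_self_Re_nonneg (minus x s)) as Hpos.
  unfold minus in Hpos. rewrite <- scal_opp_one in Hpos.
  rewrite ip_plus_l, !ip_plus_r, !ip_scal_l, !ip_scal_r, Hss, Hsx, Hxs in Hpos.
  simpl in Hpos. unfold Re. lra.
Qed.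

End InnerProduct.

Section StrongDual.
Variables (V : ModuleSpace C_Ring) (Dp : V -> Prop) (I : Type) (p : I -> V -> R).
Hypothesis Hsn : is_seminorm_family V Dp I p.

Lemma sum_sn_app F1 F2 (z : V) :
  sum_sn V I p (F1 ++ F2) z = sum_sn V I p F1 z + sum_sn V I p F2 z.
Proof. induction F1 as [|i F1 IH]; simpl; [lra | rewrite IH; lra]. Qed.

Lemma sum_sn_nonneg F (z : V) : Dp z -> 0 <= sum_sn V I p F z.
Proof.
  intros Hz. induction F as [|i F IH]; simpl; [lra|].
  pose proof (proj1 (Hsn i) z Hz). lra.
Qed.

Lemma in_Dx_plus (Phi Chi : V -> C) : in_Dx V Dp I p Phi -> in_Dx V Dp I p Chi ->
  in_Dx V Dp I p (fun z => Cplus (Phi z) (Chi z)).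
Proof.
  intros (Hadd1 & Hscal1 & F1 & c1 & Hbd1) (Hadd2 & Hscal2 & F2 & c2 & Hbd2).
  split; [|split].
  - intros x y Hx Hy. rewrite Hadd1, Hadd2 by assumption. ring.
  - intros a x Hx. rewrite Hscal1, Hscal2 by assumption. ring.
  - exists (F1 ++ F2), (Rabs c1 + Rabs c2). intros x Hx. rewrite sum_sn_app.
    pose proof (sum_sn_nonneg F1 x Hx). pose proof (sum_sn_nonneg F2 x Hx).
    pose proof (Hbd1 x Hx). pose proof (Hbd2 x Hx).
    pose proof (Cmod_triangle (Phi x) (Chi x)).
    pose proof (Rle_abs c1). pose proof (Rle_abs c2).
    pose proof (Rabs_pos c1). pose proof (Rabs_pos c2).
    nra.
Qed.

Lemma in_Dx_scal (Phi : V -> C) (c : C) :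
  in_Dx V Dp I p Phi -> in_Dx V Dp I p (fun z => Cmult c (Phi z)).
Proof.
  intros (Hadd & Hscal & F & c1 & Hbd). split; [|split].
  - intros x y Hx Hy. rewrite Hadd by assumption. ring.
  - intros a x Hx. rewrite Hscal by assumption. ring.
  - exists F, (Cmod c * c1). intros x Hx. rewrite Cmod_mult, Rmult_assoc.
    apply Rmult_le_compat_l; [apply Cmod_ge_0 | exact (Hbd x Hx)].
Qed.

Lemma in_Dx_ext (Phi Chi : V -> C) : (forall z, Phi z = Chi z) ->
  in_Dx V Dp I p Phi -> in_Dx V Dp I p Chi.
Proof.
  intros E (Hadd & Hscal & F & c & Hbd). split; [|split].
  - intros x y Hx Hy. rewrite <- !E. now apply Hadd.
  - intros a x Hx. rewrite <- !E. now apply Hscal.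
  - exists F, c. intros x Hx. rewrite <- E. now apply Hbd.
Qed.

Lemma in_Dx_sum_n (f : nat -> V -> C) N : (forall k, in_Dx V Dp I p (f k)) ->
  in_Dx V Dp I p (fun z => sum_n (fun k => f k z) N).
Proof.
  intros Hf. induction N.
  - apply (in_Dx_ext (f 0%nat)); [intros z; now rewrite sum_O | apply Hf].
  - apply (in_Dx_ext (fun z => Cplus (sum_n (fun k => f k z) N) (f (S N) z))).
    + intros z. now rewrite sum_Sn.
    + apply in_Dx_plus; [exact IHN | apply Hf].
Qed.

End StrongDual.

Section Synthesis.
Variables (V : ModuleSpace C_Ring) (ip : V -> V -> C)
  (Dp : V -> Prop) (I : Type) (p : I -> V -> R).
Hypothesis HIP : is_inner_product V ip.
Hypothesis Hsn : is_seminorm_family V Dp I p.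
Variable e : nat -> V.
Hypothesis He : forall m n, ip (e m) (e n) = if Nat.eqb m n then RtoC 1 else RtoC 0.
Variable zeta : nat -> V -> C.
Hypothesis Hzeta : forall n, in_Dx V Dp I p (zeta n).
Hypothesis Hbessel : bessel_like V Dp I p zeta.

Definition synthesis_term x z k : C := Cmult (ip x (e k)) (zeta k z).

Definition synthesis x z : C := Cseries (synthesis_term x z).

Lemma bessel_like_at z : Dp z ->
  exists b, forall N, sum_n (fun k => Cmod (zeta k z) ^ 2) N <= b.
Proof.
  intros Hz. destruct (Hbessel (fun y => y = z)) as [b Hb].
  - split; [now intros y -> | intros i; exists (p i z); intros y ->; lra].
  - exists b. intros N. now apply (Hb z N).
Qed.

Lemma synthesis_term_abs_sum_le x z b N :
  (forall N, sum_n (fun k => Cmod (zeta k z) ^ 2) N <= b) ->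
  sum_n (fun k => Cmod (synthesis_term x z k)) N <= hnorm V ip x * sqrt b.
Proof.
  intros Hb.
  rewrite (sum_n_ext _ (fun k => Cmod (ip x (e k)) * Cmod (zeta k z)))
    by (intros k; apply Cmod_mult).
  eapply Rle_trans; [apply sum_n_Cauchy_Schwarz|].
  apply Rmult_le_compat; try apply sqrt_pos; apply sqrt_le_1_alt.
  - now apply bessel_inequality.
  - apply Hb.
Qed.

Lemma Cmod_partial_synthesis_le x z b N :
  (forall N, sum_n (fun k => Cmod (zeta k z) ^ 2) N <= b) ->
  Cmod (sum_n (synthesis_term x z) N) <= hnorm V ip x * sqrt b.
Proof.
  intros Hb. eapply Rle_trans; [apply Cmod_sum_n_le | now apply synthesis_term_abs_sum_le].
Qed.

Lemma is_series_synthesis x z : Dp z ->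
  @is_series C_AbsRing C_NormedModule (synthesis_term x z) (synthesis x z).
Proof.
  intros Hz. destruct (bessel_like_at z Hz) as [b Hb].
  apply (is_series_Cseries _ (hnorm V ip x * sqrt b)).
  intros N. now apply synthesis_term_abs_sum_le.
Qed.

Lemma synthesis_plus x y z : Dp z -> synthesis (plus x y) z = Cplus (synthesis x z) (synthesis y z).
Proof.
  intros Hz. apply Cseries_unique.
  apply (is_series_ext (fun k => plus (synthesis_term x z k) (synthesis_term y z k))).
  - intros k. change (Cplus (synthesis_term x z k) (synthesis_term y z k)
      = synthesis_term (plus x y) z k).
    unfold synthesis_term. rewrite ip_plus_l by exact HIP. ring.
  - apply (is_series_plus (K := C_AbsRing) (V := C_NormedModule)); now apply is_series_synthesis.
Qed.

Lemma synthesis_scal a x z : Dp z -> synthesis (scal a x) z = Cmult a (synthesis x z).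
Proof.
  intros Hz. apply Cseries_unique.
  apply (is_series_ext (fun k => scal a (synthesis_term x z k))).
  - intros k. change (Cmult a (synthesis_term x z k) = synthesis_term (scal a x) z k).
    unfold synthesis_term. rewrite ip_scal_l by exact HIP. ring.
  - apply (is_series_scal (K := C_AbsRing) (V := C_NormedModule)). now apply is_series_synthesis.
Qed.

Lemma synthesis_e n z : synthesis (e n) z = zeta n z.
Proof.
  apply Cseries_unique. unfold is_series.
  apply (filterlim_ext_loc (fun _ => zeta n z)); [|apply filterlim_const].
  exists n. intros N HN.
  rewrite (sum_n_ext _ (fun k => if Nat.eqb k n then zeta n z else RtoC 0)).
  - rewrite sum_n_kronecker. now rewrite (proj2 (Nat.leb_le n N) HN).
  - intros k. unfold synthesis_term. rewrite He, Nat.eqb_sym.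
    destruct (Nat.eqb_spec k n) as [-> | _]; apply injective_projections; simpl; ring.
Qed.

Lemma synthesis_bounded M : t_bounded V Dp I p M ->
  exists c, forall x z, M z -> Cmod (synthesis x z) <= c * hnorm V ip x.
Proof.
  intros HM. destruct (Hbessel M HM) as [b Hb].
  exists (sqrt b). intros x z Mz. rewrite Rmult_comm.
  apply (Cmod_is_series_le (synthesis_term x z)).
  - apply is_series_synthesis. exact (proj1 HM z Mz).
  - intros N. apply Cmod_partial_synthesis_le. intros N'. now apply Hb.
Qed.

(* Reflexivity of D[t] makes strongly bounded subsets of D^x equicontinuous;
   applied to the partial sums it bounds their limit by a t-seminorm. *)
Hypothesis Hequicont : forall B, strong_bounded V Dp I p B ->
  exists (F : list I) (c : R), forall Phi x, B Phi -> Dp x -> Cmod (Phi x) <= c * sum_sn V I p F x.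

Lemma synthesis_in_Dx x : in_Dx V Dp I p (synthesis x).
Proof.
  split; [|split].
  - intros u w Hu Hw. apply Cseries_unique.
    apply (is_series_ext (fun k => plus (synthesis_term x u k) (synthesis_term x w k))).
    + intros k. change (Cplus (synthesis_term x u k) (synthesis_term x w k)
        = synthesis_term x (plus u w) k).
      unfold synthesis_term. rewrite (proj1 (Hzeta k)) by assumption. ring.
    + apply (is_series_plus (K := C_AbsRing) (V := C_NormedModule)); now apply is_series_synthesis.
  - intros a u Hu. apply Cseries_unique.
    apply (is_series_ext (fun k => scal (Cconj a) (synthesis_term x u k))).
    + intros k. change (Cmult (Cconj a) (synthesis_term x u k) = synthesis_term x (scal a u) k).
      unfold synthesis_term. rewrite (proj1 (proj2 (Hzeta k))) by assumption. ring.
    + apply (is_series_scal (K := C_AbsRing) (V := C_NormedModule)). now apply is_series_synthesis.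
  - set (partials := fun Phi : V -> C =>
           exists N, Phi = (fun z => sum_n (fun k => synthesis_term x z k) N)).
    assert (Hpartials : strong_bounded V Dp I p partials).
    { split.
      - intros Phi [N ->]. apply in_Dx_sum_n; [exact Hsn | intros k; apply in_Dx_scal, Hzeta].
      - intros M HM. destruct (Hbessel M HM) as [b Hb].
        exists (hnorm V ip x * sqrt b). intros Phi z [N ->] Mz.
        apply Cmod_partial_synthesis_le. intros N'. now apply Hb. }
    destruct (Hequicont partials Hpartials) as (F & c & HFc).
    exists F, c. intros z Hz.
    apply (Cmod_is_series_le (synthesis_term x z)); [now apply is_series_synthesis|].
    intros N. apply (HFc (fun z => sum_n (fun k => synthesis_term x z k) N)); [now exists N | exact Hz].
Qed.

Lemma synthesis_in_C_H_Dx : in_C_H_Dx V ip Dp I p synthesis.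
Proof.
  split; [|split; [|split]].
  - exact synthesis_in_Dx.
  - exact synthesis_plus.
  - exact synthesis_scal.
  - exact synthesis_bounded.
Qed.

End Synthesis.

Lemma in_C_H_Dx_sum_n {V : ModuleSpace C_Ring} {ip Dp I p} {W : V -> V -> C} (u : nat -> V) z N :
  in_C_H_Dx V ip Dp I p W -> Dp z -> W (sum_n u N) z = sum_n (fun k => W (u k) z) N.
Proof.
  intros (_ & Hplus & _) Hz. induction N.
  - now rewrite !sum_O.
  - rewrite !sum_Sn, Hplus, IHN by exact Hz. reflexivity.
Qed.

Lemma bessel_like_of_in_C_H_Dx (V : ModuleSpace C_Ring) (ip : V -> V -> C)
  (Dp : V -> Prop) (I : Type) (p : I -> V -> R) (e : nat -> V) (zeta : nat -> V -> C)
  (W : V -> V -> C) :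
  is_inner_product V ip ->
  (forall m n, ip (e m) (e n) = if Nat.eqb m n then RtoC 1 else RtoC 0) ->
  in_C_H_Dx V ip Dp I p W -> (forall n x, Dp x -> W (e n) x = zeta n x) ->
  bessel_like V Dp I p zeta.
Proof.
  intros HIP He HW HWe M HM.
  destruct (proj2 (proj2 (proj2 HW)) M HM) as [c Hc].
  exists (c ^ 2). intros z N Mz.
  assert (Hz : Dp z) by exact (proj1 HM z Mz).
  set (y := lin_comb V e (fun k => Cconj (zeta k z)) N).
  set (S := sum_n (fun k => Cmod (zeta k z) ^ 2) N).
  assert (HS : 0 <= S) by (apply sum_n_nonneg; intros; apply pow2_ge_0).
  assert (HWy : W y z = RtoC S).
  { unfold y, S, lin_comb. rewrite (in_C_H_Dx_sum_n _ _ _ HW Hz), <- sum_n_RtoC.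
    apply sum_n_ext. intros k.
    rewrite (proj1 (proj2 (proj2 HW))), HWe, Cmod2_conj by exact Hz. apply Cmult_comm. }
  assert (Hy : hnorm V ip y = sqrt S).
  { unfold hnorm, y. rewrite ip_lin_comb_self by assumption. simpl. unfold S. f_equal.
    apply sum_n_ext. intros k. now rewrite Cmod_conj. }
  pose proof (Hc y z Mz) as HcS.
  rewrite HWy, Hy, Cmod_R, Rabs_pos_eq in HcS by exact HS.
  now apply le_sqr_of_le_mul_sqrt.
Qed.

Theorem proposition2p13 (V : ModuleSpace C_Ring) (ip : V -> V -> C)
  (Dp : V -> Prop) (I : Type) (p : I -> V -> R) :
  is_rigged V ip Dp I p ->
  t_complete V Dp I p ->
  reflexive V Dp I p ->
  (exists e : nat -> V, is_ONB V ip e) ->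
  forall zeta : nat -> V -> C,
    (forall n, in_Dx V Dp I p (zeta n)) ->
    (bessel_like V Dp I p zeta <->
     forall e : nat -> V, is_ONB V ip e ->
       exists W : V -> V -> C, in_C_H_Dx V ip Dp I p W /\
         forall n x, Dp x -> W (e n) x = zeta n x).
Proof.
  intros ((HIP & _) & _ & Hsn & _) _ (_ & _ & Hequicont & _) [e0 He0] zeta Hzeta.
  split.
  - intros Hbessel e [He _].
    exists (synthesis V ip e zeta). split.
    + now apply synthesis_in_C_H_Dx.
    + intros n x _. now apply synthesis_e.
  - intros Hsynth. destruct (Hsynth e0 He0) as (W & HW & HWe).
    exact (bessel_like_of_in_C_H_Dx V ip Dp I p e0 zeta W HIP (proj1 He0) HW HWe).
Qed.
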